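(* Let $n,k,d$ be integers with $1\le k\le d<n$, let $\alpha>0$, and for each integer $M\ge 0$ put $n_M=n+M$, $k_M=k+M$, $d_M=d+M$. Let $s\in(0,1]$ be fixed and put $i=i_M=1+s(k_M-1)$. Then $$\lim_{M\to\infty}\frac{P^{1}_{n_M,k_M,d_M}\!\left(\alpha,\frac{(d_M-k_M+i)\alpha}{d_M-k_M+1}\right)}{C_{k_M,d_M}\!\left(\alpha,\frac{(d_M-k_M+i)\alpha}{d_M-k_M+1}\right)}=1.$$
   Context: For integers $1\le k\le d$ and $\alpha,\gamma>0$, $C_{k,d}(\alpha,\gamma)=\sum_{j=0}^{k-1}\min\{\alpha,\frac{d-j}{d}\gamma\}$ (the functional-repair capacity). For integers $1\le k\le d<n$ and $\alpha>0$, the function $P^{1}_{n,k,d}$ is defined at the points $\gamma=\frac{(d-k+x)\alpha}{d-k+1}$, $x\in[1,k]$, as follows: for integer $x=i\in\{1,\dots,k\}$, $P^{1}_{n,k,d}\left(\alpha,\frac{(d-k+i)\alpha}{d-k+1}\right)=\frac{n i\alpha}{n-k+i}$, and for non-integer $x\in[1,k]$ the value is obtained by linear interpolation (in $\gamma$) between the values at the two neighbouring integers, i.e. $x\mapsto P^1_{n,k,d}\left(\alpha,\frac{(d-k+x)\alpha}{d-k+1}\right)$ is the piecewise linear curve connecting these points. *)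

From Stdlib Require Import Reals Lra.
From Coquelicot Require Import Coquelicot.
Open Scope R_scope.

Fixpoint Csum (m d : nat) (a g : R) : R :=
  match m with
  | O => 0
  | S m' => Csum m' d a g + Rmin a ((INR d - INR m') / INR d * g)
  end.

Definition Ccap (k d : nat) (a g : R) : R := Csum k d a g.

Definition gam (k d : nat) (a x : R) : R :=
  (INR d - INR k + x) * a / (INR d - INR k + 1).

Definition P1int (n k : nat) (a : R) (i : nat) : R :=
  INR n * INR i * a / (INR n - INR k + INR i).

(* P^1_{n,k,d}(alpha, gamma), for gamma = gam k d alpha x with x in [1,k]:
   x is recovered from gamma; at integer x = i the value is P1int; otherwise
   linear interpolation in gamma between the neighbouring integers
   i = floor x and i+1.  (Values outside x in [1,k] are irrelevant.) *)
Definition P1 (n k d : nat) (a g : R) : R :=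
  let x := g * (INR d - INR k + 1) / a - (INR d - INR k) in
  let i := Z.to_nat (Int_part x) in
  if (k <=? i)%nat then P1int n k a k
  else P1int n k a i
       + (g - gam k d a (INR i)) / (gam k d a (INR (S i)) - gam k d a (INR i))
         * (P1int n k a (S i) - P1int n k a i).

(* At the point gamma = gam k d alpha i, P^1 interpolates the increasing function
   x |-> n x alpha / (n - k + x) between the integers around i, so it lies between
   its value at i - 1 and n alpha.  The capacity is a sum of k terms at most alpha,
   and the terms with j <= d (i - 1) / (d - k + i) equal alpha.  Along the sequence
   i - 1 = s (k_M - 1), so both resulting bounds on P^1 / C are products of ratios
   of affine functions of M with equal slopes, and the ratio is squeezed to 1. *)

From Stdlib Require Import Reals Lra Lia ZArith.
From Coquelicot Require Import Coquelicot.
Open Scope R_scope.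

Lemma is_lim_seq_affine_pinfty r t :
  0 < t -> is_lim_seq (fun M => r + t * INR M) p_infty.
Proof.
  intros ht.
  apply (is_lim_seq_plus _ _ r p_infty); [apply is_lim_seq_const| |reflexivity].
  apply (is_lim_seq_mult _ _ t p_infty); [apply is_lim_seq_const|apply is_lim_seq_INR|].
  apply is_Rbar_mult_sym, is_Rbar_mult_p_infty_pos; exact ht.
Qed.

Lemma is_lim_seq_affine_ratio p q r t :
  0 < t -> is_lim_seq (fun M => (p + q * INR M) / (r + t * INR M)) (q / t).
Proof.
  intros ht.
  pose proof (is_lim_seq_affine_pinfty r t ht) as Hden.
  assert (Hinv : is_lim_seq (fun M => / (r + t * INR M)) 0).
  { replace (Finite 0) with (Rbar_inv p_infty) by reflexivity.
    apply is_lim_seq_inv; [exact Hden|discriminate]. }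
  pose proof (is_lim_seq_plus' _ _ (q / t) ((p - q * r / t) * 0)
    (is_lim_seq_const (q / t))
    (is_lim_seq_mult' _ _ _ _ (is_lim_seq_const (p - q * r / t)) Hinv)) as Hsum.
  replace (q / t) with (q / t + (p - q * r / t) * 0) by ring.
  apply is_lim_seq_ext_loc with (2 := Hsum).
  apply is_lim_seq_spec in Hden. destruct (Hden 0) as [N HN].
  exists N. intros M HM. specialize (HN M HM). field. lra.
Qed.

Lemma Rdiv_le_compat x1 x2 y1 y2 :
  0 <= x1 <= x2 -> 0 < y2 <= y1 -> x1 / y1 <= x2 / y2.
Proof.
  intros [hx1 hx12] [hy2 hy21]. unfold Rdiv.
  apply Rmult_le_compat; try lra.
  - apply Rlt_le, Rinv_0_lt_compat; lra.
  - apply Rinv_le_contravar; lra.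
Qed.

Lemma Csum_le m D a g : 0 <= a -> Csum m D a g <= INR m * a.
Proof.
  intros ha. induction m as [|m IH]; simpl Csum; [simpl; lra|].
  rewrite S_INR. pose proof (Rmin_l a ((INR D - INR m) / INR D * g)). lra.
Qed.

Lemma Csum_ge_saturated m D a g J :
  0 <= a -> 0 <= J ->
  (forall j, (j < m)%nat -> 0 <= (INR D - INR j) / INR D * g) ->
  (forall j, (j < m)%nat -> INR j <= J -> a <= (INR D - INR j) / INR D * g) ->
  a * Rmin (INR m) J <= Csum m D a g.
Proof.
  intros ha hJ. induction m as [|m IH]; intros Hnonneg Hsat; simpl Csum.
  - simpl. rewrite Rmin_left by lra. lra.
  - assert (IHm : a * Rmin (INR m) J <= Csum m D a g)
      by (apply IH; intros j hj; [apply Hnonneg|apply Hsat]; lia).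
    pose proof (Hnonneg m (Nat.lt_succ_diag_r m)) as Hterm.
    rewrite S_INR.
    destruct (Rle_dec (INR m) J) as [HmJ|HmJ].
    + pose proof (Hsat m (Nat.lt_succ_diag_r m) HmJ) as Hsatm.
      rewrite Rmin_left in IHm by lra. rewrite (Rmin_left a) by lra.
      pose proof (Rmin_l (INR m + 1) J).
      assert (a * Rmin (INR m + 1) J <= a * (INR m + 1))
        by (apply Rmult_le_compat_l; lra).
      lra.
    + rewrite Rmin_right in IHm by lra. rewrite Rmin_right by lra.
      assert (0 <= Rmin a ((INR D - INR m) / INR D * g))
        by (apply Rmin_glb; lra).
      lra.
Qed.

Definition P1real (N K : nat) (a x : R) : R := INR N * x * a / (INR N - INR K + x).

Section P1real.
Variables (N K : nat) (a : R).
Hypotheses (hKN : (K < N)%nat) (ha : 0 <= a).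

Let hc : 0 < INR N - INR K.
Proof. pose proof (lt_INR _ _ hKN). lra. Qed.

Lemma P1real_ge0 x : 0 <= x -> 0 <= P1real N K a x.
Proof.
  intros hx. unfold P1real. apply Rdiv_le_0_compat; [|lra].
  apply Rmult_le_pos; [apply Rmult_le_pos; [apply pos_INR|]|]; lra.
Qed.

Lemma P1real_le x y : 0 <= x <= y -> P1real N K a x <= P1real N K a y.
Proof.
  intros hxy.
  assert (Hdiff : P1real N K a y - P1real N K a x
    = INR N * a * (INR N - INR K) * (y - x) / ((INR N - INR K + x) * (INR N - INR K + y)))
    by (unfold P1real; field; lra).
  assert (0 <= INR N * a * (INR N - INR K) * (y - x)
              / ((INR N - INR K + x) * (INR N - INR K + y))).
  { apply Rdiv_le_0_compat; [|apply Rmult_lt_0_compat; lra].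
    repeat apply Rmult_le_pos; try lra. apply pos_INR. }
  lra.
Qed.

Lemma P1real_le_sup x : 0 <= x -> P1real N K a x <= INR N * a.
Proof.
  intros hx.
  assert (Hdiff : INR N * a - P1real N K a x
    = INR N * a * (INR N - INR K) / (INR N - INR K + x))
    by (unfold P1real; field; lra).
  assert (0 <= INR N * a * (INR N - INR K) / (INR N - INR K + x)).
  { apply Rdiv_le_0_compat; [|lra].
    repeat apply Rmult_le_pos; try lra. apply pos_INR. }
  lra.
Qed.

End P1real.

Lemma Int_part_to_nat_bounds x :
  0 <= x -> INR (Z.to_nat (Int_part x)) <= x < INR (Z.to_nat (Int_part x)) + 1.
Proof.
  intros hx. destruct (base_Int_part x) as [Hle Hgt].
  assert (Hnonneg : (0 <= Int_part x)%Z).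
  { enough (-1 < Int_part x)%Z by lia. apply lt_IZR. simpl. lra. }
  rewrite INR_IZR_INZ, Z2Nat.id by exact Hnonneg. lra.
Qed.

Lemma P1_gam_bounds N K D a x :
  0 < a -> (K <= D)%nat -> (K < N)%nat -> 1 <= x <= INR K ->
  P1real N K a (x - 1) <= P1 N K D a (gam K D a x) <= INR N * a.
Proof.
  intros ha hKD hKN hx.
  assert (hD : INR K <= INR D) by (apply le_INR; lia).
  unfold P1; cbv zeta.
  replace (gam K D a x * (INR D - INR K + 1) / a - (INR D - INR K)) with x
    by (unfold gam; field; lra).
  pose proof (Int_part_to_nat_bounds x ltac:(lra)) as Hj.
  set (j := Z.to_nat (Int_part x)) in *.
  change (P1int N K a ?m) with (P1real N K a (INR m)).
  destruct (K <=? j)%nat.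
  - split; [apply P1real_le|apply P1real_le_sup]; trivial; lra.
  - replace ((gam K D a x - gam K D a (INR j))
               / (gam K D a (INR (S j)) - gam K D a (INR j))) with (x - INR j)
      by (unfold gam; rewrite S_INR; field; lra).
    rewrite S_INR.
    pose proof (P1real_le N K a hKN ltac:(lra) (x - 1) (INR j) ltac:(lra)).
    pose proof (P1real_le N K a hKN ltac:(lra) (INR j) (INR j + 1) ltac:(lra)).
    pose proof (P1real_le_sup N K a hKN ltac:(lra) (INR j + 1) ltac:(lra)).
    split; nra.
Qed.

Lemma Ccap_gam_bounds K D a x :
  0 < a -> (K <= D)%nat -> 1 < x <= INR K ->
  a * (INR D * (x - 1) / (INR D - INR K + x)) <= Ccap K D a (gam K D a x) <= INR K * a.
Proof.
  intros ha hKD hx.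
  assert (hD : INR K <= INR D) by (apply le_INR; lia).
  set (J := INR D * (x - 1) / (INR D - INR K + x)).
  assert (hJ0 : 0 < J) by (apply Rdiv_lt_0_compat; nra).
  assert (hJK : J <= INR K).
  { apply Rle_div_l; [lra|].
    assert ((INR D - INR K) * x <= (INR D - INR K) * INR K)
      by (apply Rmult_le_compat_l; lra).
    nra. }
  split; [|apply Csum_le; lra].
  rewrite <- (Rmin_right (INR K) J) by exact hJK.
  apply Csum_ge_saturated; try lra.
  - intros j hj. apply lt_INR in hj.
    apply Rmult_le_pos; [apply Rdiv_le_0_compat|unfold gam; apply Rdiv_le_0_compat]; nra.
  - (* J is where the term (D - j)/D * gam crosses a *)
    intros j hj hjJ. apply lt_INR in hj.
    assert (hjx : INR j * (INR D - INR K + x) <= INR D * (x - 1))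
      by (apply Rle_div_r; [lra|exact hjJ]).
    replace ((INR D - INR j) / INR D * gam K D a x)
      with ((INR D - INR j) * (INR D - INR K + x) * a / (INR D * (INR D - INR K + 1)))
      by (unfold gam; field; lra).
    apply Rle_div_r; [nra|].
    nra.
Qed.

Lemma P1_div_Ccap_bounds N K D a x :
  0 < a -> (K <= D)%nat -> (K < N)%nat -> 1 < x <= INR K ->
  P1real N K a (x - 1) / (INR K * a)
  <= P1 N K D a (gam K D a x) / Ccap K D a (gam K D a x)
  <= INR N * a / (a * (INR D * (x - 1) / (INR D - INR K + x))).
Proof.
  intros ha hKD hKN hx.
  assert (hD : INR K <= INR D) by (apply le_INR; lia).
  destruct (P1_gam_bounds N K D a x ha hKD hKN ltac:(lra)) as [HPlo HPhi].
  destruct (Ccap_gam_bounds K D a x ha hKD hx) as [HClo HChi].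
  assert (hJ : 0 < a * (INR D * (x - 1) / (INR D - INR K + x)))
    by (apply Rmult_lt_0_compat; [|apply Rdiv_lt_0_compat]; nra).
  pose proof (P1real_ge0 N K a hKN ltac:(lra) (x - 1) ltac:(lra)).
  split; apply Rdiv_le_compat; lra.
Qed.

Theorem theorem5p1 (n k d : nat) (a s : R)
  (hk1 : (1 <= k)%nat) (hkd : (k <= d)%nat) (hdn : (d < n)%nat)
  (ha : 0 < a) (hs0 : 0 < s) (hs1 : s <= 1) :
  is_lim_seq
    (fun M : nat =>
       let i := 1 + s * (INR (k + M) - 1) in
       let g := (INR (d + M) - INR (k + M) + i) * a
                / (INR (d + M) - INR (k + M) + 1) in
       P1 (n + M) (k + M) (d + M) a g / Ccap (k + M) (d + M) a g)
    (Finite 1).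
Proof.
  assert (hk : 1 <= INR k) by (apply (le_INR 1); lia).
  assert (hkd' : INR k <= INR d) by (apply le_INR; lia).
  assert (hdn' : INR d < INR n) by (apply lt_INR; lia).
  assert (Hone : Finite 1 = Finite (1 / 1 * (s / s))) by (f_equal; field; lra).
  apply is_lim_seq_le_le_loc with
    (u := fun M => (INR n + 1 * INR M) / (INR k + 1 * INR M)
          * ((s * (INR k - 1) + s * INR M) / (INR n - INR k + s * (INR k - 1) + s * INR M)))
    (w := fun M => (INR n + 1 * INR M) / (INR d + 1 * INR M)
          * ((INR d - INR k + 1 + s * (INR k - 1) + s * INR M) / (s * (INR k - 1) + s * INR M))).
  - exists 1%nat. intros M HM. cbv zeta.
    assert (hM : 1 <= INR M) by (apply (le_INR 1); lia).
    set (x := 1 + s * (INR (k + M) - 1)).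
    assert (hx : 1 < x <= INR (k + M)) by (unfold x; rewrite plus_INR; split; nra).
    destruct (P1_div_Ccap_bounds (n + M) (k + M) (d + M) a x ha ltac:(lia) ltac:(lia) hx)
      as [Hlo Hhi].
    refine (conj (Rle_trans _ _ _ _ Hlo) (Rle_trans _ _ _ Hhi _)); right;
      unfold P1real, x; rewrite !plus_INR; field; repeat split; nra.
  - rewrite Hone. apply is_lim_seq_mult'; apply is_lim_seq_affine_ratio; lra.
  - rewrite Hone. apply is_lim_seq_mult'; apply is_lim_seq_affine_ratio; lra.
Qed.
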